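(* Let $X$ be a real Hausdorff locally convex topological vector space, let $f:X\to\overline{\mathbb R}$ be proper, convex and lower semicontinuous, and let $U\subseteq\operatorname{dom} f$ be self-segment-dense in $\operatorname{dom} f$. Assume further that $\operatorname{co}(U)$ is segment-dense in $\operatorname{dom} f$. Then $\overline{f_U}=\overline{f_{\operatorname{co}(U)}}=f$ on $X$ and $\inf_{x\in U}f(x)=\inf_{x\in X}f(x)$.
   Context: $\overline{\mathbb R}=\mathbb R\cup\{\pm\infty\}$; $\operatorname{dom} f=\{x:f(x)<+\infty\}$; proper: $\operatorname{dom} f\ne\emptyset$ and $f>-\infty$. $\operatorname{co}$ is the convex hull. For $W\subseteq\operatorname{dom} f$: $\operatorname{epi} f_W=\{(w,r)\in W\times\mathbb R:f(w)\le r\}$ and $\overline{f_W}$ is the function on $X$ whose epigraph is $\operatorname{cl}(\operatorname{epi} f_W)$ in $X\times\mathbb R$. $[x,y]=\{x+t(y-x):t\in[0,1]\}$. Self-segment-dense: for convex $V$ and $U\subseteq V$, $U$ is self-segment-dense in $V$ if $V\subseteq\operatorname{cl}U$ and for all $x,y\in U$, $[x,y]\cap U$ is dense in $[x,y]$. Segment-dense: for convex $V$ and $U\subseteq V$, $U$ is segment-dense in $V$ if for each $x\in V$ there is $y\in U$ such that $x$ is a cluster point of $[x,y]\cap U$. *)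

From Stdlib Require Import Reals ClassicalEpsilon.
Set Implicit Arguments.
Open Scope R_scope.

Inductive ereal := Fin (r : R) | PInf | NInf.

Definition ele (a b : ereal) : Prop :=
  match a, b with
  | NInf, _ => True
  | _, PInf => True
  | Fin x, Fin y => x <= y
  | _, _ => False
  end.

(** Greatest lower bound in the extended reals, and the infimum operator
    (which exists since the extended reals are complete). *)
Definition is_einf (S : ereal -> Prop) (v : ereal) : Prop :=
  (forall a, S a -> ele v a) /\
  (forall w, (forall a, S a -> ele w a) -> ele w v).

Definition Einf (S : ereal -> Prop) : ereal :=
  epsilon (inhabits PInf) (is_einf S).

Record LCS := {
  car :> Type;
  vzero : car;
  vadd : car -> car -> car;
  vopp : car -> car;
  vscal : R -> car -> car;
  vopen : (car -> Prop) -> Prop;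
  add_assoc : forall x y z, vadd x (vadd y z) = vadd (vadd x y) z;
  add_comm : forall x y, vadd x y = vadd y x;
  add_zero : forall x, vadd x vzero = x;
  add_opp : forall x, vadd x (vopp x) = vzero;
  scal_one : forall x, vscal 1 x = x;
  scal_assoc : forall a b x, vscal a (vscal b x) = vscal (a * b) x;
  scal_distr_v : forall a x y, vscal a (vadd x y) = vadd (vscal a x) (vscal a y);
  scal_distr_s : forall a b x, vscal (a + b) x = vadd (vscal a x) (vscal b x);
  open_full : vopen (fun _ => True);
  open_inter : forall A B, vopen A -> vopen B -> vopen (fun x => A x /\ B x);
  open_union : forall F : (car -> Prop) -> Prop,
      (forall A, F A -> vopen A) -> vopen (fun x => exists A, F A /\ A x);
  add_cont : forall x y W, vopen W -> W (vadd x y) ->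
      exists U V, vopen U /\ vopen V /\ U x /\ V y /\
        (forall u v, U u -> V v -> W (vadd u v));
  scal_cont : forall a x W, vopen W -> W (vscal a x) ->
      exists d V, 0 < d /\ vopen V /\ V x /\
        (forall b v, Rabs (b - a) < d -> V v -> W (vscal b v));
  hausdorff : forall x y, x <> y ->
      exists U V, vopen U /\ vopen V /\ U x /\ V y /\
        (forall z, U z -> V z -> False);
  locally_convex : forall W, vopen W -> W vzero ->
      exists V, vopen V /\ V vzero /\ (forall x, V x -> W x) /\
        (forall x y t, V x -> V y -> 0 <= t <= 1 ->
           V (vadd x (vscal t (vadd y (vopp x)))))
}.

Arguments vzero {l}.
Arguments vadd {l}.
Arguments vopp {l}.
Arguments vscal {l}.
Arguments vopen {l}.

Section Defs.
Context {X : LCS}.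

Definition seg (x y : X) (z : X) : Prop :=
  exists t, 0 <= t <= 1 /\ z = vadd x (vscal t (vadd y (vopp x))).

Definition convex_set (C : X -> Prop) : Prop :=
  forall x y z, C x -> C y -> seg x y z -> C z.

Definition co (A : X -> Prop) (x : X) : Prop :=
  forall C, convex_set C -> (forall y, A y -> C y) -> C x.

Definition closure (A : X -> Prop) (x : X) : Prop :=
  forall W, vopen W -> W x -> exists y, W y /\ A y.

Definition closed (A : X -> Prop) : Prop := vopen (fun x => ~ A x).

Definition cluster_point (A : X -> Prop) (x : X) : Prop :=
  forall W, vopen W -> W x -> exists y, W y /\ A y /\ y <> x.

Definition self_segment_dense (U V : X -> Prop) : Prop :=
  (forall x, U x -> V x) /\
  (forall x, V x -> closure U x) /\
  (forall x y, U x -> U y ->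
     forall z, seg x y z -> closure (fun w => seg x y w /\ U w) z).

Definition segment_dense (U V : X -> Prop) : Prop :=
  (forall x, U x -> V x) /\
  (forall x, V x -> exists y, U y /\
     cluster_point (fun w => seg x y w /\ U w) x).

Definition dom (f : X -> ereal) (x : X) : Prop := f x <> PInf.

Definition proper (f : X -> ereal) : Prop :=
  (exists x, dom f x) /\ (forall x, f x <> NInf).

(** convexity of f = convexity of its epigraph in X x R *)
Definition convex_fun (f : X -> ereal) : Prop :=
  forall x y r s t, ele (f x) (Fin r) -> ele (f y) (Fin s) -> 0 <= t <= 1 ->
    ele (f (vadd x (vscal t (vadd y (vopp x))))) (Fin (r + t * (s - r))).

Definition lsc (f : X -> ereal) : Prop :=
  forall r, closed (fun x => ele (f x) (Fin r)).

Definition epi_W (f : X -> ereal) (W : X -> Prop) (w : X) (r : R) : Prop :=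
  W w /\ ele (f w) (Fin r).

(** (x,r) lies in the closure of epi f_W in X x R (product topology) *)
Definition cl_epi_W (f : X -> ereal) (W : X -> Prop) (x : X) (r : R) : Prop :=
  forall N, vopen N -> N x -> forall eps, 0 < eps ->
    exists w s, N w /\ Rabs (s - r) < eps /\ epi_W f W w s.

(** overline{f_W}: the function whose epigraph is cl(epi f_W), i.e.
    x |-> inf {r | (x,r) in cl(epi f_W)} *)
Definition fbar (f : X -> ereal) (W : X -> Prop) (x : X) : ereal :=
  Einf (fun v => exists r, v = Fin r /\ cl_epi_W f W x r).

End Defs.

(* Lower semicontinuity puts the closure of the epigraph of [f_W] inside the
   epigraph of [f], so [fbar f W >= f] for every [W].  Conversely, let
   [f x = a < r].  Segment density of [co U] yields [y] in [co U] such that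
   points [z] of [[x, y]] in [co U] accumulate at [x], and by convexity
   [f z < r] for those close to [x].  Each such [z] is radially approximable
   from [U]: for every neighbourhood [N] of [z] and every [d] in (0,1] there is
   [q] in a fixed sublevel set of [f] with [z + d (q - z)] in [U] and in [N].
   This holds trivially on [U] and survives convex combinations thanks to the
   self-segment density of [U], hence holds on [co U]; taking [d] small,
   convexity gives [u] in [U] and [N] with [f u <= r].  So [(x, r)] lies in the
   closure of the epigraph of [f_U], which yields both equalities, and the
   infima agree because every finite value of [f] is approximated from above by
   values of [f] on [U]. *)

From Stdlib Require Import Reals Lra ClassicalEpsilon Classical FunctionalExtensionality PropExtensionality.
Open Scope R_scope.

Arguments add_assoc {l}. Arguments add_comm {l}. Arguments add_zero {l}.
Arguments add_opp {l}. Arguments scal_one {l}. Arguments scal_assoc {l}.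
Arguments scal_distr_v {l}. Arguments scal_distr_s {l}.

Section VectorAlgebra.
Variable X : LCS.
Implicit Types x y p q r s : X.

Lemma add0v x : vadd vzero x = x.
Proof. rewrite add_comm; apply add_zero. Qed.

Lemma addv_cancel_l p q r : vadd p q = vadd p r -> q = r.
Proof.
intro H.
assert (H2 : vadd (vopp p) (vadd p q) = vadd (vopp p) (vadd p r)) by now rewrite H.
now rewrite !add_assoc, (add_comm (vopp p) p), add_opp, !add0v in H2.
Qed.

Lemma scal0v x : vscal 0 x = vzero.
Proof.
apply (addv_cancel_l (vscal 0 x)).
rewrite add_zero, <- scal_distr_s; f_equal; ring.
Qed.

Lemma oppvE x : vopp x = vscal (-1) x.
Proof.
apply (addv_cancel_l x); rewrite add_opp.
rewrite <- (scal_one x) at 1; rewrite <- scal_distr_s.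
now replace (1 + -1) with 0 by ring; rewrite scal0v.
Qed.

Lemma addvACA p q r s : vadd (vadd p q) (vadd r s) = vadd (vadd p r) (vadd q s).
Proof.
rewrite <- !add_assoc; f_equal; rewrite !add_assoc; f_equal; apply add_comm.
Qed.

(* Identities between vector expressions in at most four vectors are decided by
   reflection: an expression evaluates to its normal form [lin4] whose real
   coefficients are then compared by [field]. *)
Definition lin4 (x0 x1 x2 x3 : X) (a b c d : R) :=
  vadd (vscal a x0) (vadd (vscal b x1) (vadd (vscal c x2) (vscal d x3))).

Lemma lin4_add x0 x1 x2 x3 a b c d a' b' c' d' :
  vadd (lin4 x0 x1 x2 x3 a b c d) (lin4 x0 x1 x2 x3 a' b' c' d') =
  lin4 x0 x1 x2 x3 (a + a') (b + b') (c + c') (d + d').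
Proof.
unfold lin4.
now rewrite (addvACA (vscal a x0)), (addvACA (vscal b x1)), (addvACA (vscal c x2)), !scal_distr_s.
Qed.

Lemma lin4_scal x0 x1 x2 x3 k a b c d :
  vscal k (lin4 x0 x1 x2 x3 a b c d) = lin4 x0 x1 x2 x3 (k * a) (k * b) (k * c) (k * d).
Proof. now unfold lin4; rewrite !scal_distr_v, !scal_assoc. Qed.

Inductive atom4 := At0 | At1 | At2 | At3.

Inductive vterm :=
  | VAtom (i : atom4) | VAdd (e1 e2 : vterm) | VOpp (e : vterm)
  | VScal (k : R) (e : vterm) | VZero.

Fixpoint vterm_eval (x0 x1 x2 x3 : X) (e : vterm) : X :=
  match e with
  | VAtom At0 => x0 | VAtom At1 => x1 | VAtom At2 => x2 | VAtom At3 => x3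
  | VAdd e1 e2 => vadd (vterm_eval x0 x1 x2 x3 e1) (vterm_eval x0 x1 x2 x3 e2)
  | VOpp e => vopp (vterm_eval x0 x1 x2 x3 e)
  | VScal k e => vscal k (vterm_eval x0 x1 x2 x3 e)
  | VZero => vzero
  end.

Definition atom_delta (i j : atom4) : R :=
  match i, j with At0, At0 | At1, At1 | At2, At2 | At3, At3 => 1 | _, _ => 0 end.

Fixpoint vterm_coef (i : atom4) (e : vterm) : R :=
  match e with
  | VAtom j => atom_delta i j
  | VAdd e1 e2 => vterm_coef i e1 + vterm_coef i e2
  | VOpp e => - vterm_coef i e
  | VScal k e => k * vterm_coef i e
  | VZero => 0
  end.

Lemma vterm_eval_lin4 x0 x1 x2 x3 e :
  vterm_eval x0 x1 x2 x3 e =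
  lin4 x0 x1 x2 x3 (vterm_coef At0 e) (vterm_coef At1 e) (vterm_coef At2 e) (vterm_coef At3 e).
Proof.
induction e as [i| e1 IH1 e2 IH2| e IH| k e IH|]; simpl.
- unfold lin4; destruct i; simpl; now rewrite ?scal0v, ?scal_one, ?add_zero, ?add0v.
- now rewrite IH1, IH2, lin4_add.
- rewrite IH, oppvE, lin4_scal; f_equal; ring.
- now rewrite IH, lin4_scal.
- now unfold lin4; rewrite !scal0v, !add_zero.
Qed.

Lemma vterm_eval_eq x0 x1 x2 x3 e1 e2 :
  (forall i, vterm_coef i e1 = vterm_coef i e2) ->
  vterm_eval x0 x1 x2 x3 e1 = vterm_eval x0 x1 x2 x3 e2.
Proof. intro H; now rewrite !vterm_eval_lin4, !H. Qed.

End VectorAlgebra.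

Arguments vterm_eval {X}.

Definition comb {X : LCS} (x y : X) (t : R) : X := vadd x (vscal t (vadd y (vopp x))).

Ltac reify_vterm x0 x1 x2 x3 t :=
  lazymatch t with
  | vadd ?a ?b =>
      let e1 := reify_vterm x0 x1 x2 x3 a in
      let e2 := reify_vterm x0 x1 x2 x3 b in constr:(VAdd e1 e2)
  | vopp ?a => let e := reify_vterm x0 x1 x2 x3 a in constr:(VOpp e)
  | vscal ?k ?a => let e := reify_vterm x0 x1 x2 x3 a in constr:(VScal k e)
  | vzero => constr:(VZero)
  | _ => match t with
         | x0 => constr:(VAtom At0) | x1 => constr:(VAtom At1)
         | x2 => constr:(VAtom At2) | x3 => constr:(VAtom At3)
         end
  end.

Ltac vec_ring x0 x1 x2 x3 :=
  unfold comb;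
  lazymatch goal with
  | |- @eq (car ?X) ?l ?r =>
      let el := reify_vterm x0 x1 x2 x3 l in
      let er := reify_vterm x0 x1 x2 x3 r in
      change (vterm_eval x0 x1 x2 x3 el = vterm_eval x0 x1 x2 x3 er);
      apply vterm_eval_eq; intros []; simpl
  end.

Section Comb.
Variable X : LCS.
Implicit Types x y a b c p q e : X.

Lemma comb0 x y : comb x y 0 = x.
Proof. vec_ring x y x x; ring. Qed.

Lemma comb1 x y : comb x y 1 = y.
Proof. vec_ring x y x x; ring. Qed.

Lemma comb_id x t : comb x x t = x.
Proof. vec_ring x x x x; ring. Qed.

Lemma combE x y t : comb x y t = vadd (vscal (1 - t) x) (vscal t y).
Proof. vec_ring x y x x; ring. Qed.

Lemma comb_subr x y s t : vadd (comb x y t) (vopp (comb x y s)) = vscal (t - s) (vadd y (vopp x)).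
Proof. vec_ring x y x x; ring. Qed.

Lemma comb0_scal x k t : comb vzero (vscal k x) t = vscal (t * k) x.
Proof. vec_ring x x x x; ring. Qed.

Lemma comb_comb_comb a b qa qb d s :
  comb (comb a qa d) (comb b qb d) s = comb (comb a b s) (comb qa qb s) d.
Proof. vec_ring a b qa qb; ring. Qed.

Lemma comb_combA c p e d n : d + n - n * d <> 0 ->
  comb (comb c p d) e n = comb c (comb p e (n / (d + n - n * d))) (d + n - n * d).
Proof. intro Hk; vec_ring c p e e; field; auto. Qed.

Lemma comb_rebase_r x y s t : s <> 1 -> comb x y t = comb (comb x y s) y ((t - s) / (1 - s)).
Proof. intro Hs; vec_ring x y x x; field; lra. Qed.

Lemma comb_rebase_l x y s t : s <> 0 -> comb x y t = comb (comb x y s) x ((s - t) / s).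
Proof. intro Hs; vec_ring x y x x; field; auto. Qed.

Lemma comb_comb_r c p k d : d <> 0 -> comb c p k = comb c (comb c p (k / d)) d.
Proof. intro Hd; vec_ring c p c c; field; auto. Qed.

Lemma scalvK x t : t <> 0 -> vscal (/ t) (vscal t x) = x.
Proof. intro Ht; vec_ring x x x x; field; auto. Qed.

Lemma scalv_eq0 t x : t <> 0 -> vscal t x = vzero -> x = vzero.
Proof.
intros Ht E; rewrite <- (scalvK x t Ht), E.
vec_ring x x x x; ring.
Qed.

Lemma subv_neq0 x y : x <> y -> vadd y (vopp x) <> vzero.
Proof.
intros Hxy E; apply Hxy.
transitivity (vadd (vadd y (vopp x)) x); [rewrite E | ]; vec_ring x y x x; ring.
Qed.

End Comb.

Section Topology.
Variable X : LCS.

Lemma open_of_nbhd (P : X -> Prop) :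
  (forall z, P z -> exists A, vopen A /\ A z /\ forall w, A w -> P w) -> vopen P.
Proof.
intro H.
replace P with (fun x => exists A, (vopen A /\ forall w, A w -> P w) /\ A x).
- apply open_union; intros A [HA _]; exact HA.
- apply functional_extensionality; intro x; apply propositional_extensionality; split.
  + intros (A & [_ HAP] & Ax); auto.
  + intro Px; destruct (H x Px) as (A & HA & Ax & HAP); exists A; tauto.
Qed.

Lemma open_translate (V : X -> Prop) (c : X) : vopen V -> vopen (fun z => V (vadd z c)).
Proof.
intro HV; apply open_of_nbhd; intros z Hz.
destruct (add_cont X z c V HV Hz) as (A & B & HA & _ & Az & Bc & HAB).
exists A; repeat split; auto.
Qed.

Lemma scal_cont_r (a : R) (x : X) (W : X -> Prop) : vopen W -> W (vscal a x) ->
  exists V, vopen V /\ V x /\ forall v, V v -> W (vscal a v).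
Proof.
intros HW Hx; destruct (scal_cont X a x W HW Hx) as (d & V & Hd & HV & Vx & H).
exists V; repeat split; auto; intros v Hv; apply H; auto.
now rewrite Rminus_diag, Rabs_R0.
Qed.

Lemma comb_cont (N : X -> Prop) (a b : X) (s : R) : vopen N -> N (comb a b s) ->
  exists Na Nb, vopen Na /\ vopen Nb /\ Na a /\ Nb b /\
    forall x y, Na x -> Nb y -> N (comb x y s).
Proof.
intros HN Hab; rewrite combE in Hab.
destruct (add_cont X _ _ N HN Hab) as (A & B & HA & HB & Aa & Bb & HAB).
destruct (scal_cont_r _ _ _ HA Aa) as (Va & HVa & Va_a & Ha).
destruct (scal_cont_r _ _ _ HB Bb) as (Vb & HVb & Vb_b & Hb).
exists Va, Vb; repeat split; auto.
intros x y Hx Hy; rewrite combE; apply HAB; auto.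
Qed.

(* Separating [0] from [±eta (y - x)] by a convex neighbourhood [V] of [0]: if
   [(s' - s)(y - x)] lay in [V] with [|s' - s| >= eta], then so would one of the
   points [±eta (y - x)] of the segment from [0] to it. *)
Lemma comb_param_nbhd (x y : X) (s eta : R) : x <> y -> 0 < eta ->
  exists P, vopen P /\ P (comb x y s) /\
    forall t, P (comb x y t) -> Rabs (t - s) < eta.
Proof.
intros Hxy Heta.
set (d := vadd y (vopp x)).
assert (Hd : d <> vzero) by (apply subv_neq0; auto).
assert (H1 : vzero <> vscal eta d) by (intro E; apply Hd, (scalv_eq0 X eta); auto; lra).
assert (H2 : vzero <> vscal (- eta) d) by (intro E; apply Hd, (scalv_eq0 X (- eta)); auto; lra).
destruct (hausdorff X H1) as (U1 & V1 & HU1 & HV1 & U1z & V1e & D1).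
destruct (hausdorff X H2) as (U2 & V2 & HU2 & HV2 & U2z & V2e & D2).
destruct (locally_convex X (fun z => U1 z /\ U2 z) (open_inter X _ _ HU1 HU2) (conj U1z U2z))
  as (V & HV & Vz & VW & Vconv).
exists (fun z => V (vadd z (vopp (comb x y s)))); split; [|split].
- now apply open_translate.
- now simpl; rewrite add_opp.
- intros t Ht; simpl in Ht; rewrite comb_subr in Ht; fold d in Ht.
  destruct (Rlt_or_le (Rabs (t - s)) eta) as [Hlt|Hge]; [exact Hlt|exfalso].
  assert (Hts : t - s <> 0) by (intro E; rewrite E, Rabs_R0 in Hge; lra).
  set (l := eta / Rabs (t - s)).
  assert (Hl : 0 <= l <= 1).
  { unfold l; split; [apply Rlt_le, Rdiv_lt_0_compat; lra|].
    apply (Rmult_le_reg_r (Rabs (t - s))); [lra|]; field_simplify; lra. }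
  pose proof (Vconv vzero (vscal (t - s) d) l Vz Ht Hl) as Hc.
  change (V (comb vzero (vscal (t - s) d) l)) in Hc.
  rewrite comb0_scal in Hc; apply VW in Hc; destruct Hc as [Hc1 Hc2].
  destruct (Rle_or_lt 0 (t - s)).
  + replace (l * (t - s)) with eta in Hc1
      by (unfold l; rewrite Rabs_pos_eq by lra; field; exact Hts).
    exact (D1 _ Hc1 V1e).
  + replace (l * (t - s)) with (- eta) in Hc2
      by (unfold l; rewrite Rabs_left by lra; field; exact Hts).
    exact (D2 _ Hc2 V2e).
Qed.

End Topology.

Lemma ele_trans a b c : ele a b -> ele b c -> ele a c.
Proof. destruct a, b, c; simpl; auto; try tauto; lra. Qed.

Lemma ele_antisym a b : ele a b -> ele b a -> a = b.
Proof. destruct a, b; simpl; try tauto; intros; f_equal; lra. Qed.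

Lemma ele_fin_le a M M' : ele a (Fin M) -> M <= M' -> ele a (Fin M').
Proof. destruct a; simpl; auto; lra. Qed.

Lemma ele_fin_approx w a : (forall e, 0 < e -> ele w (Fin (a + e))) -> ele w (Fin a).
Proof.
intro H; destruct w as [r| |]; simpl.
- destruct (Rle_or_lt r a) as [|Har]; auto.
  specialize (H ((r - a) / 2) ltac:(lra)); simpl in H; lra.
- exact (H 1 Rlt_0_1).
- exact I.
Qed.

Lemma Einf_eq S v : is_einf S v -> Einf S = v.
Proof.
intro Hv; unfold Einf.
pose proof (epsilon_spec (inhabits PInf) (is_einf S) (ex_intro _ v Hv)) as He.
destruct Hv as [Hv1 Hv2], He as [He1 He2].
apply ele_antisym; [apply Hv2 | apply He2]; assumption.
Qed.

Lemma Einf_lb_ext S T :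
  (forall w, (forall a, S a -> ele w a) <-> (forall a, T a -> ele w a)) -> Einf S = Einf T.
Proof.
intro H; unfold Einf, is_einf; f_equal.
apply functional_extensionality; intro v; apply propositional_extensionality.
rewrite (H v); split; intros [H1 H2]; split; auto; intros w Hw; apply H2, H; exact Hw.
Qed.

Section ClosedEpigraph.
Variable X : LCS.
Variable f : X -> ereal.

Lemma cl_epi_W_le (W : X -> Prop) x r : lsc f -> cl_epi_W f W x r -> ele (f x) (Fin r).
Proof.
intros Hlsc H; apply NNPP; intro Hn.
assert (Heps : exists eps, 0 < eps /\ ~ ele (f x) (Fin (r + eps))).
{ destruct (f x) as [a| |]; simpl in *.
  - exists ((a - r) / 2); split; lra.
  - exists 1; split; [lra | tauto].
  - tauto. }
destruct Heps as (eps & Heps & Hx).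
destruct (H _ (Hlsc (r + eps)) Hx eps Heps) as (w & s & Hw & Hs & _ & Hws).
apply Hw, (ele_fin_le _ s); auto.
apply Rabs_def2 in Hs; lra.
Qed.

Lemma cl_epi_W_mono (W W' : X -> Prop) x r :
  (forall w, W w -> W' w) -> cl_epi_W f W x r -> cl_epi_W f W' x r.
Proof.
intros HWW' H N HN Nx eps Heps.
destruct (H N HN Nx eps Heps) as (w & s & Nw & Hs & [Ww Fw]).
exists w, s; repeat split; auto.
Qed.

Lemma fbar_eq (W : X -> Prop) x : f x <> NInf ->
  (forall r, cl_epi_W f W x r -> ele (f x) (Fin r)) ->
  (forall a r, f x = Fin a -> a < r -> cl_epi_W f W x r) -> fbar f W x = f x.
Proof.
intros Hx Hle Hstrict; unfold fbar; apply Einf_eq.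
destruct (f x) as [a| |] eqn:E; [| |contradiction]; split.
- intros v (r & -> & H); exact (Hle r H).
- intros w Hw; apply ele_fin_approx; intros e He.
  apply Hw; exists (a + e); split; auto; apply (Hstrict a); auto; lra.
- intros v (r & -> & H); specialize (Hle r H); contradiction.
- intros [] _; simpl; auto.
Qed.

End ClosedEpigraph.

Section Approximation.
Variable X : LCS.
Variable f : X -> ereal.
Variable U : X -> Prop.
Hypothesis f_convex : convex_fun f.
Hypothesis f_noninf : forall x, f x <> NInf.
Hypothesis U_dom : forall x, U x -> dom f x.
Hypothesis U_seg_dense : forall x y, U x -> U y ->
  forall z, seg x y z -> closure (fun w => seg x y w /\ U w) z.

Lemma sublevel_convex M x y t : ele (f x) (Fin M) -> ele (f y) (Fin M) -> 0 <= t <= 1 ->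
  ele (f (comb x y t)) (Fin M).
Proof.
intros Hx Hy Ht; pose proof (f_convex x y M M t Hx Hy Ht) as H.
now replace (M + t * (M - M)) with M in H by ring.
Qed.

Lemma dom_fin x : dom f x -> exists a, f x = Fin a.
Proof.
unfold dom; intro H; specialize (f_noninf x).
destruct (f x); [eauto | congruence | congruence].
Qed.

Lemma U_near_segment_point ua ub s (N : X -> Prop) d :
  U ua -> U ub -> 0 <= s <= 1 -> vopen N -> N (comb ua ub s) -> 0 < d ->
  exists e nu, (e = ua \/ e = ub) /\ 0 <= nu <= d /\
    U (comb (comb ua ub s) e nu) /\ N (comb (comb ua ub s) e nu).
Proof.
intros Ua Ub Hs HN Nc Hd.
destruct (classic (s = 0 \/ s = 1 \/ ua = ub)) as [Hdeg|Hndeg].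
{ exists ua, 0; rewrite comb0; repeat split; auto; try lra.
  destruct Hdeg as [-> | [-> | ->]]; now rewrite ?comb0, ?comb1, ?comb_id. }
assert (Hs0 : s <> 0) by tauto; assert (Hs1 : s <> 1) by tauto.
assert (Hne : ua <> ub) by tauto.
set (eta := d * Rmin s (1 - s)).
assert (Hm0 : 0 < Rmin s (1 - s)) by (apply Rmin_glb_lt; lra).
assert (Hm1 : Rmin s (1 - s) <= s) by apply Rmin_l.
assert (Hm2 : Rmin s (1 - s) <= 1 - s) by apply Rmin_r.
assert (Heta : 0 < eta) by (unfold eta; apply Rmult_lt_0_compat; lra).
destruct (comb_param_nbhd X ua ub s eta Hne Heta) as (P & HP & Pc & HPc).
destruct (U_seg_dense ua ub Ua Ub (comb ua ub s) (ex_intro _ s (conj Hs eq_refl))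
            (fun z => N z /\ P z) (open_inter X _ _ HN HP) (conj Nc Pc))
  as (w & [Nw Pw] & [t [Ht Ew]] & Uw).
change (w = comb ua ub t) in Ew; subst w.
specialize (HPc t Pw); unfold eta in HPc.
destruct (Rle_or_lt s t).
- exists ub, ((t - s) / (1 - s)); rewrite <- comb_rebase_r by exact Hs1.
  rewrite Rabs_pos_eq in HPc by lra; repeat split; auto.
  + apply Rle_mult_inv_pos; lra.
  + apply (Rmult_le_reg_r (1 - s)); [lra|]; field_simplify; nra.
- exists ua, ((s - t) / s); rewrite <- comb_rebase_l by exact Hs0.
  rewrite Rabs_left in HPc by lra; repeat split; auto.
  + apply Rle_mult_inv_pos; lra.
  + apply (Rmult_le_reg_r s); [lra|]; field_simplify; nra.
Qed.

Definition radially_approximable (w : X) : Prop :=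
  exists M, ele (f w) (Fin M) /\
    forall N, vopen N -> N w -> forall d, 0 < d <= 1 ->
      exists q, ele (f q) (Fin M) /\ U (comb w q d) /\ N (comb w q d).

Lemma radially_approximable_U u : U u -> radially_approximable u.
Proof.
intro Uu; destruct (dom_fin u (U_dom u Uu)) as [a Ha].
exists a; rewrite Ha; split; [simpl; lra|].
intros N HN Nu d Hd; exists u; rewrite comb_id, Ha; simpl; repeat split; auto; lra.
Qed.

(* Approximate [a] and [b] within [U] along segments of relative length [d/2],
   move the combination [c'] of the approximants towards an endpoint within [U]
   by [U_near_segment_point], and rewrite the result as a point of a segment
   from [comb a b s] of relative length [d]. *)
Lemma radially_approximable_convex : convex_set radially_approximable.
Proof.
intros a b c [Ma [Fa Ha]] [Mb [Fb Hb]] [s [Hs Ec]].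
change (c = comb a b s) in Ec; subst c.
set (M := Rmax Ma Mb).
assert (HaM : forall x, ele (f x) (Fin Ma) -> ele (f x) (Fin M))
  by (intros x Hx; apply (ele_fin_le _ Ma); auto; apply Rmax_l).
assert (HbM : forall x, ele (f x) (Fin Mb) -> ele (f x) (Fin M))
  by (intros x Hx; apply (ele_fin_le _ Mb); auto; apply Rmax_r).
exists M; split; [apply sublevel_convex; auto|].
intros N HN Nc d Hd.
set (d0 := d / 2).
assert (Hd0 : 0 < d0 <= 1) by (unfold d0; lra).
destruct (comb_cont X N a b s HN Nc) as (Na & Nb & HNa & HNb & Naa & Nbb & HNab).
destruct (Ha Na HNa Naa d0 Hd0) as (qa & Fqa & Uua & Nua).
destruct (Hb Nb HNb Nbb d0 Hd0) as (qb & Fqb & Uub & Nub).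
assert (Fua : ele (f (comb a qa d0)) (Fin M)) by (apply sublevel_convex; auto; lra).
assert (Fub : ele (f (comb b qb d0)) (Fin M)) by (apply sublevel_convex; auto; lra).
set (p := comb qa qb s).
assert (Fp : ele (f p) (Fin M)) by (apply sublevel_convex; auto).
destruct (U_near_segment_point _ _ s N d0 Uua Uub Hs HN (HNab _ _ Nua Nub) ltac:(lra))
  as (e & nu & He & Hnu & Uc & Nc').
assert (Fe : ele (f e) (Fin M)) by (destruct He as [-> | ->]; assumption).
rewrite comb_comb_comb in Uc, Nc'; fold p in Uc, Nc'.
rewrite comb_combA in Uc, Nc' by nra.
set (k := d0 + nu - nu * d0) in *.
assert (Hk : 0 < k <= d) by (unfold k, d0 in *; nra).
assert (Hnuk : nu <= k) by (unfold k; nra).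
set (r := comb p e (nu / k)) in *.
rewrite (comb_comb_r _ _ r k d) in Uc, Nc' by lra.
exists (comb (comb a b s) r (k / d)); repeat split; auto.
assert (Hdiv : forall x y, 0 <= x <= y -> 0 < y -> 0 <= x / y <= 1).
{ intros x y Hxy Hy; split; [apply Rle_mult_inv_pos; lra|].
  apply (Rmult_le_reg_r y); [lra|]; field_simplify; lra. }
apply sublevel_convex; [apply sublevel_convex; auto | |apply Hdiv; lra].
apply sublevel_convex; auto; apply Hdiv; lra.
Qed.

Lemma radially_approximable_co z : co U z -> radially_approximable z.
Proof.
intro Hz; apply Hz; [exact radially_approximable_convex | exact radially_approximable_U].
Qed.

Lemma co_U_sublevel_approx z cz r (N : X -> Prop) :
  co U z -> f z = Fin cz -> cz < r -> vopen N -> N z ->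
  exists u, U u /\ N u /\ ele (f u) (Fin r).
Proof.
intros Hz Ez Hr HN Nz.
destruct (radially_approximable_co z Hz) as [M [FM HM]].
rewrite Ez in FM; simpl in FM.
set (d := Rmin 1 ((r - cz) / (M - cz + 1))).
assert (Hq : 0 < (r - cz) / (M - cz + 1)) by (apply Rdiv_lt_0_compat; lra).
assert (Hd : 0 < d <= 1) by (unfold d; split; [apply Rmin_glb_lt; lra | apply Rmin_l]).
destruct (HM N HN Nz d Hd) as (q & Fq & Uu & Nu).
exists (comb z q d); repeat split; auto.
apply (ele_fin_le _ _ _ (f_convex z q cz M d ltac:(rewrite Ez; simpl; lra) Fq ltac:(lra))).
assert (Hdq : d * (M - cz + 1) <= r - cz).
{ apply (Rmult_le_reg_r (/ (M - cz + 1))); [apply Rinv_0_lt_compat; lra|].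
  replace (d * (M - cz + 1) * / (M - cz + 1)) with d by (field; lra).
  apply Rmin_r. }
nra.
Qed.

Hypothesis co_U_seg_dense : segment_dense (co U) (dom f).

(* Along the segment from [x] to the point [y] of [co U] given by segment
   density, convexity bounds [f] near [x] by [f x + t (f y - f x)]. *)
Lemma co_U_near_strict x a r (N : X -> Prop) :
  f x = Fin a -> a < r -> vopen N -> N x ->
  exists z cz, co U z /\ N z /\ f z = Fin cz /\ cz < r.
Proof.
intros Ex Har HN Nx.
destruct co_U_seg_dense as [Hsub Hcl].
destruct (Hcl x ltac:(unfold dom; rewrite Ex; discriminate)) as (y & Hy & Hclu).
assert (Hxy : x <> y).
{ intros <-; destruct (Hclu _ (open_full X) I) as (z & _ & [[t [_ Ez]] _] & Hzx).
  change (z = comb x x t) in Ez; rewrite comb_id in Ez; auto. }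
destruct (dom_fin y (Hsub y Hy)) as [b Eb].
set (eta := (r - a) / (2 * (Rabs (b - a) + 1))).
pose proof (Rabs_pos (b - a)).
assert (Heta : 0 < eta) by (unfold eta; apply Rdiv_lt_0_compat; lra).
destruct (comb_param_nbhd X x y 0 eta Hxy Heta) as (P & HP & Px & HPc).
rewrite comb0 in Px.
destruct (Hclu (fun z => N z /\ P z) (open_inter X _ _ HN HP) (conj Nx Px))
  as (z & [Nz Pz] & [[t [Ht Ez]] Hcoz] & _).
change (z = comb x y t) in Ez; subst z.
specialize (HPc t Pz); rewrite Rminus_0_r, Rabs_pos_eq in HPc by lra.
pose proof (f_convex x y a b t ltac:(rewrite Ex; simpl; lra) ltac:(rewrite Eb; simpl; lra) Ht)
  as Hfz.
change (ele (f (comb x y t)) (Fin (a + t * (b - a)))) in Hfz.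
destruct (dom_fin (comb x y t)) as [cz Ecz].
{ unfold dom; intro E; rewrite E in Hfz; exact Hfz. }
exists (comb x y t), cz; repeat split; auto.
rewrite Ecz in Hfz; simpl in Hfz.
assert (t * (b - a) <= t * Rabs (b - a)) by (apply Rmult_le_compat_l; [lra | apply Rle_abs]).
assert (eta * (Rabs (b - a) + 1) = (r - a) / 2) by (unfold eta; field; lra).
nra.
Qed.

Lemma cl_epi_U_strict x a r : f x = Fin a -> a < r -> cl_epi_W f U x r.
Proof.
intros Ex Har N HN Nx eps Heps.
destruct (co_U_near_strict x a r N Ex Har HN Nx) as (z & cz & Hz & Nz & Ez & Hcz).
destruct (co_U_sublevel_approx z cz r N Hz Ez Hcz HN Nz) as (u & Uu & Nu & Fu).
exists u, r; repeat split; auto.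
now rewrite Rminus_diag, Rabs_R0.
Qed.

Lemma lb_U_lb w : (forall u, U u -> ele w (f u)) -> forall x, ele w (f x).
Proof.
intros Hw x; destruct (f x) as [a| |] eqn:Ex; [| now destruct w | now destruct (f_noninf x)].
apply ele_fin_approx; intros e He.
destruct (cl_epi_U_strict x a (a + e / 2) Ex ltac:(lra) _ (open_full X) I (e / 2) ltac:(lra))
  as (u & s & _ & Hs & Uu & Fu).
apply Rabs_def2 in Hs.
apply (ele_trans _ (f u)); [auto | apply (ele_fin_le _ s); auto; lra].
Qed.

End Approximation.

Theorem mainTheorem9 (X : LCS) (f : X -> ereal) (U : X -> Prop) :
  proper f -> convex_fun f -> lsc f ->
  (forall x, U x -> dom f x) ->
  self_segment_dense U (dom f) ->
  segment_dense (co U) (dom f) ->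
  (forall x, fbar f U x = f x) /\
  (forall x, fbar f (co U) x = f x) /\
  Einf (fun v => exists x, U x /\ v = f x) = Einf (fun v => exists x, v = f x).
Proof.
intros [_ Hfin] Hconv Hlsc HU [_ [_ Hseg]] Hco.
pose proof (cl_epi_U_strict X f U Hconv Hfin HU Hseg Hco) as Hstrict.
split; [|split].
- intro x; apply fbar_eq; [apply Hfin | intro r; apply cl_epi_W_le, Hlsc | apply Hstrict].
- intro x; apply fbar_eq; [apply Hfin | intro r; apply cl_epi_W_le, Hlsc |].
  intros a r Ex Har; apply (cl_epi_W_mono X f U); [intros u Uu C _ HC; auto|].
  exact (Hstrict x a r Ex Har).
- apply Einf_lb_ext; intro w; split.
  + intros Hw a [x ->]; apply (lb_U_lb X f U Hconv Hfin HU Hseg Hco).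
    intros u Uu; apply Hw; eauto.
  + intros Hw a (x & _ & ->); apply Hw; eauto.
Qed.
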